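(* Let $H$ be a bipartite graph and let $k_1 = \min \max(|A|,|B|)$ and $k_2 = \min \min(|A|,|B|)$, where both minima range over all partitions $(A,B)$ of $V(H)$ into two independent sets. Assume $k_2 \ge 2$. Let $G$ be an $n$-vertex graph with chromatic number $\chi$ and independence number $\alpha$. If $k_2 \ge 3$, then $$\chi_H(G) \le \min\left\{ \frac{n}{k_1-1} + \frac{k_1-2}{k_1-1}\chi,\ \frac{n}{k_2-1}\left(1 - \frac{1}{\chi}\right) + \frac{k_2-2}{k_2-1}(\chi - 1) + 1 \right\}.$$ If $k_2 = 2$, then $$\chi_H(G) \le \min\left\{ \frac{n}{k_1-1} + \frac{k_1-2}{k_1-1}\chi,\ n - \alpha + 1 \right\}.$$
   Context: All graphs are finite and simple. For a fixed bipartite graph $H$, a proper vertex coloring of a graph $G$ is called an $H$-avoiding coloring if for any two color classes, the subgraph of $G$ induced by their union contains no induced subgraph isomorphic to $H$. $\chi_H(G)$ denotes the minimum number of colors in an $H$-avoiding coloring of $G$. *)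

From mathcomp Require Import all_boot all_order all_algebra.
Set Implicit Arguments. Unset Strict Implicit. Unset Printing Implicit Defensive.

Definition simple_graph (T : finType) (e : rel T) : Prop :=
  symmetric e /\ irreflexive e.

Definition indep (T : finType) (e : rel T) (S : {set T}) : bool :=
  [forall x in S, forall y in S, ~~ e x y].

Definition bipartition (U : finType) (eH : rel U) (A : {set U}) : bool :=
  indep eH A && indep eH (~: A).

Definition bipartite (U : finType) (eH : rel U) : Prop :=
  exists A : {set U}, bipartition eH A.

Definition k1 (U : finType) (eH : rel U) : nat :=
  \big[minn/#|U|]_(A : {set U} | bipartition eH A) maxn #|A| #|~: A|.

Definition k2 (U : finType) (eH : rel U) : nat :=
  \big[minn/#|U|]_(A : {set U} | bipartition eH A) minn #|A| #|~: A|.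

Definition has_induced_copy (T U : finType) (e : rel T) (eH : rel U)
  (S : {set T}) : bool :=
  [exists f : {ffun U -> T},
     [&& injectiveb f, [forall u, f u \in S] &
         [forall u, forall v, eH u v == e (f u) (f v)]]].

Definition proper_coloring (T : finType) (e : rel T) (k : nat)
  (c : {ffun T -> 'I_k}) : bool :=
  [forall x, forall y, e x y ==> (c x != c y)].

Definition color_class (T : finType) (k : nat) (c : {ffun T -> 'I_k})
  (i : 'I_k) : {set T} := [set x | c x == i].

Definition H_avoiding (T U : finType) (e : rel T) (eH : rel U) (k : nat)
  (c : {ffun T -> 'I_k}) : bool :=
  proper_coloring e c &&
  [forall i : 'I_k, forall j : 'I_k,
     (i != j) ==> ~~ has_induced_copy e eH (color_class c i :|: color_class c j)].

(* chi_H(G): minimum number of colours of an H-avoiding colouring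
   (a colouring with #|T| colours always suffices in the setting of the theorem). *)
Definition chiH (T U : finType) (e : rel T) (eH : rel U) : nat :=
  \big[minn/#|T|]_(k < #|T|.+1 |
      [exists c : {ffun T -> 'I_k}, H_avoiding e eH c]) (k : nat).

Definition chromatic (T : finType) (e : rel T) : nat :=
  \big[minn/#|T|]_(k < #|T|.+1 |
      [exists c : {ffun T -> 'I_k}, proper_coloring e c]) (k : nat).

Definition alpha (T : finType) (e : rel T) : nat :=
  \max_(S : {set T} | indep e S) #|S|.

(* Everything rests on one counting principle (chiH_le_image): if a map d
   partitions V(G) into independent fibres such that of any two distinct
   fibres the smaller has fewer than k2 vertices, or both have fewer than k1,
   then colouring every vertex by its fibre is H-avoiding, so chi_H(G) is at
   most the number of fibres.  This holds because an induced copy of H in the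
   union of two independent sets P, Q is a bipartition (A, B) of H with
   |A| <= |P| and |B| <= |Q| (induced_copy_size).

   The partitions are obtained by cutting the classes of an optimal proper
   colouring into consecutive chunks of prescribed sizes (section Chunks):
   - chunks of size k1 - 1 everywhere give (k1 - 1) chi_H <= n + chi (k1 - 2);
   - keeping a largest class (of size >= n / chi) whole and cutting the others
     into chunks of size k2 - 1 gives
     (k2 - 1) chi_H + n / chi <= (k2 - 1) + n + (chi - 1) (k2 - 2);
   - keeping a maximum independent set whole and making every other vertex a
     singleton gives chi_H <= n - alpha + 1.
   Dividing these integer inequalities by k - 1 over rat yields the theorem. *)

From HB Require Import structures.
From mathcomp Require Import all_boot all_order all_algebra zify ring lra.
Import Order.TTheory GRing.Theory Num.Theory.

Set Implicit Arguments.
Unset Strict Implicit.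
Unset Printing Implicit Defensive.

(* minn is associative and commutative; declaring it as such gives the generic
   big-operator lemmas (bigD1, ...) for the minima defining k1, k2 and chiH. *)
HB.instance Definition _ := SemiGroup.isComLaw.Build nat minn minnA minnC.

Lemma bigminn_le (I : finType) (P : pred I) (F : I -> nat) d i :
  P i -> (\big[minn/d]_(j | P j) F j <= F i)%N.
Proof. by move=> Pi; rewrite (bigD1 i) //= geq_minl. Qed.

Lemma bigminn_ind (I : finType) (P : pred I) (F : I -> nat) d (Q : nat -> Prop) :
  Q d -> (forall i, P i -> Q (F i)) -> Q (\big[minn/d]_(i | P i) F i).
Proof. by move=> Qd QF; apply: big_ind => // x y Qx Qy; rewrite /minn; case: ifP. Qed.

Lemma indepP (T : finType) (e : rel T) (S : {set T}) :
  reflect (forall x y, x \in S -> y \in S -> ~~ e x y) (indep e S).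
Proof.
apply: (iffP forallP) => [H x y xS yS | H x].
- by move: (H x); rewrite xS => /forallP /(_ y); rewrite yS.
- by apply/implyP => xS; apply/forallP => y; apply/implyP; apply: H.
Qed.

Lemma indep_subset (T : finType) (e : rel T) (P Q : {set T}) :
  P \subset Q -> indep e Q -> indep e P.
Proof. by move=> /subsetP PQ /indepP iQ; apply/indepP => x y /PQ xQ /PQ; apply: iQ. Qed.

Lemma color_class_indep (T : finType) (e : rel T) k (c : {ffun T -> 'I_k}) i :
  proper_coloring e c -> indep e (color_class c i).
Proof.
move=> /forallP pc; apply/indepP => x y; rewrite !inE => /eqP cx /eqP cy.
by apply/negP => exy; move: (forallP (pc x) y); rewrite exy cx cy eqxx.
Qed.

Lemma card_color_classes (T : finType) k (c : {ffun T -> 'I_k}) :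
  (\sum_(i < k) #|color_class c i| = #|T|)%N.
Proof.
rewrite -sum1_card (partition_big c xpredT) //=.
by apply: eq_bigr => i _; rewrite -sum1_card; apply: eq_bigl => x; rewrite inE.
Qed.

Definition fibre (T D : finType) (d : T -> D) (a : D) : {set T} :=
  [set x | d x == a].

Section InducedCopies.
Variables (T U : finType) (e : rel T) (eH : rel U).

(* Over every bipartition min <= max, hence k2 <= k1. *)
Lemma k2_le_k1 : (k2 eH <= k1 eH)%N.
Proof. by apply: (big_ind2 (fun x y => x <= y)%N) => // *; lia. Qed.

Lemma bipartition_bounds (A : {set U}) : bipartition eH A ->
  (k2 eH <= minn #|A| #|~: A|)%N /\ (k1 eH <= maxn #|A| #|~: A|)%N.
Proof.
by move=> hA; split; apply: (@bigminn_le _ (bipartition eH) _ #|U| A hA).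
Qed.

(* An induced copy of H in the union of two independent sets P, Q splits along
   P and Q into a bipartition of H, whose sides are at most |P| and |Q|. *)
Lemma induced_copy_size (P Q : {set T}) : indep e P -> indep e Q ->
  has_induced_copy e eH (P :|: Q) ->
  (k2 eH <= minn #|P| #|Q|)%N /\ (k1 eH <= maxn #|P| #|Q|)%N.
Proof.
move=> /indepP iP /indepP iQ.
case/existsP => f /and3P[/injectiveP f_inj /forallP fS /forallP fE].
have fQ u : f u \notin P -> f u \in Q by move: (fS u); rewrite inE => /orP[->|].
have eHE u v : eH u v = e (f u) (f v) by apply/eqP; exact: (forallP (fE u) v).
pose A := [set u | f u \in P].
have hA : bipartition eH A.
  apply/andP; split; apply/indepP => u v; rewrite !inE => hu hv; rewrite eHE.
  - exact: iP.
  - exact: iQ (fQ _ hu) (fQ _ hv).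
have AP : (#|A| <= #|P|)%N.
  rewrite -(card_in_imset (in2W f_inj)); apply/subset_leq_card/subsetP => x.
  by case/imsetP => u; rewrite inE => hu ->.
have AQ : (#|~: A| <= #|Q|)%N.
  rewrite -(card_in_imset (in2W f_inj)); apply/subset_leq_card/subsetP => x.
  by case/imsetP => u; rewrite !inE => hu ->; apply: fQ.
have := bipartition_bounds hA; lia.
Qed.

Lemma chiH_le_card : (chiH e eH <= #|T|)%N.
Proof.
by apply: (@bigminn_ind _ _ _ _ (fun m => m <= #|T|)%N) => // i _; rewrite -ltnS.
Qed.

Lemma chiH_le_coloring k (c : {ffun T -> 'I_k}) :
  H_avoiding e eH c -> (chiH e eH <= k)%N.
Proof.
move=> c_avoid; case: (leqP k #|T|) => [hk | /ltnW]; last exact: leq_trans chiH_le_card.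
have k_lt : (k < #|T|.+1)%N by [].
have := @bigminn_le _
  (fun i : 'I_#|T|.+1 => [exists c : {ffun T -> 'I_i}, H_avoiding e eH c])
  (fun i => nat_of_ord i) #|T| (Ordinal k_lt); apply.
by apply/existsP; exists c.
Qed.

Lemma chiH_le_image (D : finType) (d : T -> D) :
  (forall a, indep e (fibre d a)) ->
  (forall a b, a != b ->
     (minn #|fibre d a| #|fibre d b| < k2 eH)%N \/
     (maxn #|fibre d a| #|fibre d b| < k1 eH)%N) ->
  (chiH e eH <= #|[set d x | x : T]|)%N.
Proof.
move=> fibre_indep small; case: (pickP T) => [x0 _ | T0]; last first.
  by have := chiH_le_card; rewrite (eq_card0 T0) leqn0 => /eqP ->.
have dA x : d x \in [set d x | x : T] by exact: imset_f.
pose c := [ffun x => enum_rank_in (dA x0) (d x)].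
have class_fibre i : color_class c i = fibre d (enum_val i).
  apply/setP => x; rewrite !inE ffunE; apply/eqP/eqP => [<- | ->].
  - by rewrite enum_rankK_in.
  - by rewrite enum_valK_in.
apply: (@chiH_le_coloring _ c); apply/andP; split.
- apply/forallP => x; apply/forallP => y; apply/implyP => exy; apply/eqP => cxy.
  have /indepP := fibre_indep (enum_val (c x)); rewrite -class_fibre.
  by move=> /(_ x y); rewrite !inE cxy eqxx exy => /(_ isT isT).
- apply/forallP => i; apply/forallP => j; apply/implyP => ij; apply/negP.
  rewrite !class_fibre => /(induced_copy_size (fibre_indep _) (fibre_indep _)).
  by case: (small (enum_val i) (enum_val j)); rewrite ?(inj_eq enum_val_inj) //; lia.
Qed.

End InducedCopies.

Lemma sum_ord_lt N q : (\sum_(j < N) ((j : nat) < q : nat) = minn N q)%N.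
Proof.
elim: N => [|N IHN]; first by rewrite big_ord0 min0n.
by rewrite big_ord_recr /= IHN; case: (ltnP N q) => /= hN; lia.
Qed.

(* j * s < m  iff  j is below the ceiling of m / s. *)
Lemma ltn_ceil j s m : (0 < s)%N -> (j < (m + s - 1) %/ s)%N = (j * s < m)%N.
Proof. by move=> s_gt0; rewrite -[(j < _)%N]/(j.+1 <= _)%N leq_divRL // mulSn; lia. Qed.

Lemma sum_const_ord k a : (\sum_(i < k) a = k * a)%N.
Proof. by rewrite sum_nat_const card_ord. Qed.

(* s * ceil(m / s) <= m + (s - 1): rounding up costs less than s. *)
Lemma mul_ceil_le m s : (s * ((m + s - 1) %/ s) <= m + (s - 1))%N.
Proof. by rewrite mulnC; apply: leq_trans (leq_divM _ _) _; lia. Qed.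

(* Cutting the classes of a colouring c into chunks: the vertices of class i,
   listed in a fixed order, are grouped into consecutive blocks of s i
   vertices.  A chunk is named by its class and its block number. *)
Section Chunks.
Variables (T : finType) (k : nat) (c : {ffun T -> 'I_k}) (s : 'I_k -> nat).

Definition class_rank (x : T) : nat := index x (enum (color_class c (c x))).

(* The block number is below n, hence fits in 'I_n.+1. *)
Definition chunk (x : T) : 'I_k * 'I_#|T|.+1 :=
  (c x, inord (class_rank x %/ s (c x))).

Lemma class_rank_lt x : (class_rank x < #|color_class c (c x)|)%N.
Proof. by rewrite /class_rank cardE index_mem mem_enum inE. Qed.

Lemma chunk_block x : ((chunk x).2 : nat) = (class_rank x %/ s (c x))%N.
Proof.
rewrite /= inordK // ltnS; apply: leq_trans (leq_div _ _) _.
exact: leq_trans (ltnW (class_rank_lt x)) (max_card _).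
Qed.

Lemma chunk_fibre_sub a : fibre chunk a \subset color_class c a.1.
Proof. by apply/subsetP => x; rewrite !inE => /eqP <-. Qed.

(* Vertices of a chunk have distinct ranks in their class, with equal
   quotients by s, hence distinct remainders: a chunk has at most s vertices. *)
Lemma chunk_fibre_card a : (0 < s a.1)%N -> (#|fibre chunk a| <= s a.1)%N.
Proof.
move=> s_gt0; pose rem x := Ordinal (ltn_pmod (class_rank x) s_gt0).
have fibreE x : x \in fibre chunk a -> c x = a.1 /\ (class_rank x %/ s a.1)%N = a.2.
  by rewrite inE => /eqP <-; rewrite chunk_block.
have rem_inj : {in fibre chunk a &, injective rem}.
  move=> x y /fibreE[cx qx] /fibreE[cy qy] /(congr1 val) /= rxy.
  have rank_xy : class_rank x = class_rank y.
    by rewrite (divn_eq (class_rank x) (s a.1)) (divn_eq (class_rank y) (s a.1))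
               rxy qx qy.
  have x_in : x \in enum (color_class c a.1) by rewrite mem_enum inE cx.
  have y_in : y \in enum (color_class c a.1) by rewrite mem_enum inE cy.
  by apply: (index_inj x x_in y_in); move: rank_xy; rewrite /class_rank cx cy.
by rewrite -(card_in_imset rem_inj); apply: leq_trans (max_card _) _; rewrite card_ord.
Qed.

Lemma chunk_single_class i : (#|color_class c i| <= s i)%N ->
  {in color_class c i &, forall x y, chunk x = chunk y}.
Proof.
move=> small x y; rewrite !inE => /eqP cx /eqP cy.
have block0 z : c z = i -> ((chunk z).2 : nat) = 0%N.
  move=> cz; rewrite chunk_block divn_small // cz.
  by apply: leq_trans small; rewrite -cz; apply: class_rank_lt.
apply: injective_projections; first by rewrite /= cx cy.
by apply: ord_inj; rewrite !block0.
Qed.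

Lemma chunk_single_class_empty i a b : (#|color_class c i| <= s i)%N ->
  a.1 = i -> b.1 = i -> a != b -> minn #|fibre chunk a| #|fibre chunk b| = 0%N.
Proof.
move=> small ai bi ab.
case: (set_0Vmem (fibre chunk a)) => [-> | [x xa]]; first by rewrite cards0 min0n.
case: (set_0Vmem (fibre chunk b)) => [-> | [y yb]]; first by rewrite cards0 minn0.
have in_class z p : z \in fibre chunk p -> p.1 = i -> z \in color_class c i.
  by move=> zp <-; apply: (subsetP (chunk_fibre_sub p)).
have := chunk_single_class small (in_class _ _ xa ai) (in_class _ _ yb bi).
by move: xa yb ab; rewrite !inE => /eqP -> /eqP -> /eqP.
Qed.

Lemma chunk_count : (forall i, 0 < s i)%N ->
  (#|[set chunk x | x : T]| <=
     \sum_(i < k) (#|color_class c i| + s i - 1) %/ s i)%N.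
Proof.
move=> s_gt0; pose ceil i := ((#|color_class c i| + s i - 1) %/ s i)%N.
have sub : [set chunk x | x : T] \subset [set p : 'I_k * 'I_#|T|.+1 | p.2 < ceil p.1]%N.
  apply/subsetP => _ /imsetP[x _ ->]; rewrite inE ltn_ceil // chunk_block.
  exact: leq_ltn_trans (leq_divM _ _) (class_rank_lt x).
apply: (leq_trans (subset_leq_card sub)).
rewrite -sum1_card (eq_bigl (fun p : 'I_k * 'I_#|T|.+1 => p.2 < ceil p.1)%N);
  last by move=> p; rewrite inE.
rewrite -(pair_big_dep xpredT (fun i (j : 'I_#|T|.+1) => (j : nat) < ceil i)%N
                       (fun _ _ => 1%N)).
apply: leq_sum => i _; rewrite big_mkcond /=.
under eq_bigr => j _ do rewrite -[if _ then _ else _]/(nat_of_bool _).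
by rewrite sum_ord_lt geq_minr.
Qed.

End Chunks.

Section Bounds.
Variables (T U : finType) (e : rel T) (eH : rel U).

Lemma chromatic_coloring : irreflexive e ->
  exists c : {ffun T -> 'I_(chromatic e)}, proper_coloring e c.
Proof.
move=> e_irr.
apply: (@bigminn_ind _ _ _ _ (fun k => exists c : {ffun T -> 'I_k}, proper_coloring e c)).
- exists [ffun x => enum_rank x]; apply/forallP => x; apply/forallP => y.
  apply/implyP => exy; rewrite !ffunE (inj_eq enum_rank_inj).
  by apply: contraTneq exy => ->; rewrite e_irr.
- by move=> i /existsP.
Qed.

Lemma chunk_fibre_indep k (c : {ffun T -> 'I_k}) (s : 'I_k -> nat) :
  proper_coloring e c -> forall a, indep e (fibre (chunk c s) a).
Proof.
move=> c_proper a.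
exact: indep_subset (chunk_fibre_sub c s a) (color_class_indep _ c_proper).
Qed.

(* Cutting every class of a proper k-colouring into chunks of k1 - 1 vertices:
   no two chunks carry a copy of H, and there are few chunks. *)
Lemma chiH_bound_uniform k (c : {ffun T -> 'I_k}) :
  proper_coloring e c -> (2 <= k1 eH)%N ->
  ((k1 eH - 1) * chiH e eH <= #|T| + k * (k1 eH - 2))%N.
Proof.
move=> c_proper k1_ge2; pose s (_ : 'I_k) := (k1 eH - 1)%N.
have s_gt0 i : (0 < s i)%N by rewrite /s; lia.
have chiH_le : (chiH e eH <= \sum_(i < k) (#|color_class c i| + s i - 1) %/ s i)%N.
  apply: leq_trans (chunk_count c s_gt0).
  apply: chiH_le_image (chunk_fibre_indep s c_proper) _ => a b _; right.
  have := chunk_fibre_card c (s_gt0 a.1); have := chunk_fibre_card c (s_gt0 b.1).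
  by rewrite /s; lia.
apply: leq_trans (leq_mul (leqnn _) chiH_le) _.
rewrite big_distrr -(card_color_classes c) -sum_const_ord -big_split /=.
by apply: leq_sum => i _; apply: leq_trans (mul_ceil_le _ _) _; rewrite /s; lia.
Qed.

(* Keeping the class m whole and cutting every other class into chunks of
   k2 - 1 vertices: two distinct chunks are never both inside m, so one of
   them has fewer than k2 vertices. *)
Lemma chiH_bound_class k (c : {ffun T -> 'I_k}) (m : 'I_k) :
  proper_coloring e c -> (2 <= k2 eH)%N ->
  ((k2 eH - 1) * chiH e eH + #|color_class c m| + (k2 eH - 2) <=
     (k2 eH - 1) + #|T| + k * (k2 eH - 2))%N.
Proof.
move=> c_proper k2_ge2.
pose s i := if i == m then #|T|.+1 else (k2 eH - 1)%N.
have s_gt0 i : (0 < s i)%N by rewrite /s; case: ifP => _; lia.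
have s_other i : i != m -> s i = (k2 eH - 1)%N by rewrite /s => /negbTE ->.
have m_whole : (#|color_class c m| <= s m)%N.
  by rewrite /s eqxx; apply: leq_trans (max_card _) _.
pose ceil i := ((#|color_class c i| + s i - 1) %/ s i)%N.
have chiH_le : (chiH e eH <= \sum_(i < k) ceil i)%N.
  apply: leq_trans (chunk_count c s_gt0).
  apply: chiH_le_image (chunk_fibre_indep s c_proper) _ => a b ab; left.
  have small p : p.1 != m -> (#|fibre (chunk c s) p| < k2 eH)%N.
    by move=> /s_other sp; have := chunk_fibre_card c (s_gt0 p.1); rewrite sp; lia.
  case: (eqVneq a.1 m) => [am | /small]; last by lia.
  case: (eqVneq b.1 m) => [bm | /small]; last by lia.
  by rewrite (chunk_single_class_empty m_whole am bm ab); apply: ltnW.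
have ceil_m : (ceil m <= 1)%N.
  rewrite /ceil /s eqxx -ltnS ltn_divLR //.
  by have := max_card (color_class c m); lia.
have ceil_others : ((k2 eH - 1) * \sum_(i < k | i != m) ceil i <=
                    \sum_(i < k | i != m) (#|color_class c i| + (k2 eH - 2)))%N.
  rewrite big_distrr; apply: leq_sum => i im.
  by rewrite /ceil s_other //; apply: leq_trans (mul_ceil_le _ _) _; lia.
have total : (#|T| + k * (k2 eH - 2) = #|color_class c m| + (k2 eH - 2) +
               \sum_(i < k | i != m) (#|color_class c i| + (k2 eH - 2)))%N.
  by rewrite -(card_color_classes c) -(sum_const_ord k) -big_split (bigD1 m).
have split_m : (chiH e eH <= ceil m + \sum_(i < k | i != m) ceil i)%N.
  by move: chiH_le; rewrite (bigD1 m).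
have := leq_mul (leqnn (k2 eH - 1)) split_m; rewrite mulnDr.
have := leq_mul (leqnn (k2 eH - 1)) ceil_m; nia.
Qed.

(* The largest class of a proper k-colouring has at least n / k vertices
   (for k = 0 the graph is empty and the bound is trivial). *)
Lemma chiH_bound_largest k (c : {ffun T -> 'I_k}) :
  proper_coloring e c -> (2 <= k2 eH)%N ->
  exists cm, (#|T| <= k * cm)%N /\
    ((k2 eH - 1) * chiH e eH + cm + (k2 eH - 2) <=
       (k2 eH - 1) + #|T| + k * (k2 eH - 2))%N.
Proof.
move=> c_proper k2_ge2; case: (posnP k) => [k0 | k_gt0].
  have T0 : #|T| = 0%N by apply: eq_card0 => x; case: (c x) => i; rewrite k0.
  by exists 0%N; have := chiH_le_card e eH; rewrite T0; lia.
have [m _ m_max] := @arg_maxnP _ (Ordinal k_gt0) xpredT (fun i => #|color_class c i|) isT.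
exists #|color_class c m|; split; last exact: chiH_bound_class.
rewrite -(card_color_classes c) -sum_const_ord.
by apply: leq_sum => i _; apply: m_max.
Qed.

(* A maximum independent set exists, the empty set being independent. *)
Lemma alpha_witness : exists2 S : {set T}, indep e S & #|S| = alpha e.
Proof.
have : (0 < #|[pred S : {set T} | indep e S]|)%N.
  by apply/card_gt0P; exists set0; rewrite inE; apply/indepP => x y; rewrite inE.
case/(eq_bigmax_cond (fun S : {set T} => #|S|)) => S S_indep alphaE.
by exists S; rewrite // /alpha alphaE.
Qed.

Lemma alpha_le_card : (alpha e <= #|T|)%N.
Proof. by have [S _ <-] := alpha_witness; apply: max_card. Qed.

(* Keep a maximum independent set S as one part and make every other vertex
   a singleton: of two distinct parts one is a singleton, smaller than k2. *)
Lemma chiH_bound_alpha : irreflexive e -> (2 <= k2 eH)%N ->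
  (chiH e eH <= #|T| - alpha e + 1)%N.
Proof.
move=> e_irr k2_ge2; have [S S_indep S_card] := alpha_witness.
pose d x := if x \in S then None else Some x.
have fibre_None : fibre d None = S.
  by apply/setP => x; rewrite !inE /d; case: (x \in S).
have fibre_Some z : fibre d (Some z) \subset [set z].
  by apply/subsetP => x; rewrite !inE /d; case: ifP => // _ /eqP[->].
have fibre_indep a : indep e (fibre d a).
  case: a => [z|]; last by rewrite fibre_None.
  apply: indep_subset (fibre_Some z) _; apply/indepP => x y.
  by rewrite !inE => /eqP -> /eqP ->; rewrite e_irr.
have small z : (#|fibre d (Some z)| <= 1)%N.
  by rewrite -(cards1 z) subset_leq_card.
apply: leq_trans (chiH_le_image fibre_indep _) _.
  move=> a b ab; left; case: a b ab => [z|] [w|] //= _.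
  - by have := small z; lia.
  - by have := small z; lia.
  - by have := small w; lia.
have image_sub : [set d x | x : T] \subset None |: [set Some x | x in ~: S].
  apply/subsetP => _ /imsetP[x _ ->]; rewrite !inE /d.
  by case: ifP => x_S //=; apply: imset_f; rewrite inE x_S.
apply: leq_trans (subset_leq_card image_sub) _.
rewrite cardsU1 card_imset; last exact: Some_inj.
by have := cardsC S; rewrite S_card; case: (None \notin _); lia.
Qed.

End Bounds.

Local Open Scope ring_scope.

Lemma ratio_bound1 (k c n x : nat) : (1 < k)%N ->
  ((k - 1) * c <= n + x * (k - 2))%N ->
  (c%:R : rat) <= n%:R / (k%:R - 1) + (k%:R - 2) / (k%:R - 1) * x%:R.
Proof.
move=> k_gt1; rewrite -(ler_nat rat) natrD !natrM !natrB ?(ltnW k_gt1) //.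
have k1_gt0 : 0 < k%:R - 1 :> rat by rewrite subr_gt0 ltr1n.
have -> : n%:R / (k%:R - 1) + (k%:R - 2) / (k%:R - 1) * x%:R =
          (n%:R + (k%:R - 2) * x%:R) / (k%:R - 1) :> rat.
  by field; rewrite gt_eqF.
by rewrite ler_pdivlMr //; nra.
Qed.

(* The second bound divided by k - 1 > 0, using n / x <= cm (also for x = 0,
   where n / x = 0). *)
Lemma ratio_bound2 (k c n x cm : nat) : (1 < k)%N ->
  ((k - 1) * c + cm + (k - 2) <= (k - 1) + n + x * (k - 2))%N ->
  (n <= x * cm)%N ->
  (c%:R : rat) <= n%:R / (k%:R - 1) * (1 - 1 / x%:R) +
                    (k%:R - 2) / (k%:R - 1) * (x%:R - 1) + 1.
Proof.
move=> k_gt1; rewrite -(ler_nat rat) !natrD !natrM !natrB ?(ltnW k_gt1) // => bound.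
have k1_gt0 : 0 < k%:R - 1 :> rat by rewrite subr_gt0 ltr1n.
move=> n_le; have avg_le : n%:R * (1 / x%:R) <= cm%:R :> rat.
  have [-> | x_gt0] := posnP x; first by rewrite invr0 mulr0 ler0n.
  by rewrite mul1r ler_pdivrMr ?ltr0n // mulrC -natrM ler_nat.
move: (1 / x%:R) avg_le => inv_x avg_le.
have -> : n%:R / (k%:R - 1) * (1 - inv_x) + (k%:R - 2) / (k%:R - 1) * (x%:R - 1) + 1
   = (n%:R - n%:R * inv_x + (k%:R - 2) * (x%:R - 1) + (k%:R - 1)) / (k%:R - 1) :> rat.
  by field; rewrite gt_eqF.
by rewrite ler_pdivlMr //; nra.
Qed.

Theorem proposition1 (T U : finType) (e : rel T) (eH : rel U) :
  simple_graph e -> simple_graph eH -> bipartite eH ->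
  (2 <= k2 eH)%N ->
  let n : rat := (#|T|)%:R in
  let chi : rat := (chromatic e)%:R in
  let K1 : rat := (k1 eH)%:R in
  let K2 : rat := (k2 eH)%:R in
  let b1 : rat := n / (K1 - 1) + (K1 - 2) / (K1 - 1) * chi in
  ((3 <= k2 eH)%N ->
     ((chiH e eH)%:R : rat) <=
       Num.min b1 (n / (K2 - 1) * (1 - 1 / chi) + (K2 - 2) / (K2 - 1) * (chi - 1) + 1)) /\
  (k2 eH = 2%N ->
     ((chiH e eH)%:R : rat) <= Num.min b1 (n - (alpha e)%:R + 1)).
Proof.
move=> [_ e_irr] _ _ k2_ge2 /=.
have k1_ge2 := leq_trans k2_ge2 (k2_le_k1 eH).
have [c c_proper] := chromatic_coloring e_irr.
have bound1 := ratio_bound1 k1_ge2 (chiH_bound_uniform c_proper k1_ge2).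
split=> _; rewrite le_min bound1 /=.
- have [cm [n_le bound2]] := chiH_bound_largest c_proper k2_ge2.
  exact: ratio_bound2 k2_ge2 bound2 n_le.
- have := chiH_bound_alpha e_irr k2_ge2.
  by rewrite -(ler_nat rat) natrD natrB ?alpha_le_card.
Qed.
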